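(* Let $n\ge 1$, $\mathcal{I}=\{1,\dots,n\}$, $S>0$, and $C_i>0$, $D_i>0$ for $i\in\mathcal{I}$. Put $D=\sum_{i\in\mathcal{I}}D_i$, $\tilde D_i=\min\{C_i,D_i\}$, $\tilde\beta_i=\tilde D_i/D_i$. For $\theta\ge 0$ consider the linear program $P(\theta)$: $$\max\ \sum_{i\in\mathcal{I}}\big[\beta_i-\theta(\beta-\beta_i)\big]$$ over $(\beta_1,\dots,\beta_n,\beta)\in\mathbb{R}^{n+1}$ subject to $\sum_{i\in\mathcal{I}}\beta_iD_i\le S$; $0\le\beta_i\le\tilde\beta_i$ and $\beta_i\le\beta$ for all $i$; $0\le \beta\le 1$. Let $\beta^{EQ}=\max\{b\ge 0:\ (b,\dots,b,b)\text{ is feasible for }P(\theta)\}=\max\{b\ge0: b\le\tilde\beta_i\ \forall i,\ bD\le S,\ b\le 1\}$ (the perfectly equitable fill-rate), and assume the problem is non-utopian, i.e. $\beta^{EQ}D<S$. Let $m^U=|\{i\in\mathcal{I}:\beta^{EQ}<\tilde\beta_i\}|$ be the number of unbinding variables of the equitable solution, and set $$\theta^U=\frac{m^U}{n-m^U}.$$ Then $\theta^U$ is the tightest upper bound of $\theta$ in the following sense: (a) for every $\theta\ge\theta^U$, the solution $\beta_1=\dots=\beta_n=\beta=\beta^{EQ}$ is optimal for $P(\theta)$; (b) for every $\theta$ with $0\le\theta<\theta^U$, there exists a feasible solution $(\beta_1,\dots,\beta_n,\beta)$ of $P(\theta)$ with $n\beta^{EQ}<\sum_{i\in\mathcal{I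}}\beta_i-\theta\sum_{i\in\mathcal{I}}(\beta-\beta_i)$.
   Context: This models a food-bank allocating supply $S$ (pounds of food) among $n$ agencies; agency $i$ has capacity $C_i$ and demand $D_i$, $\beta_i$ is its fill-rate (allocation divided by demand), $\beta$ is (an upper bound on) the maximum fill-rate, and $\theta\ge0$ is a penalty on deviations from the maximum fill-rate. $\tilde D_i$ is the effective demand and $\tilde\beta_i$ the maximum possible fill-rate of agency $i$. A variable $\beta_i$ is called binding if $\beta_i=\tilde\beta_i$. The objective value of the equal-fill-rate solution at level $\beta^{EQ}$ is $n\beta^{EQ}$. *)

From HB Require Import structures.
From mathcomp Require Import all_boot all_order all_algebra.
Set Implicit Arguments. Unset Strict Implicit. Unset Printing Implicit Defensive.
Import Order.TTheory GRing.Theory Num.Theory.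
Local Open Scope ring_scope.

Section FoodBank.
Variables (R : realFieldType) (n : nat).
Implicit Types (S theta B : R).

Definition eff_demand C D (i : 'I_n) : R := Num.min (C i) (D i).

Definition max_fill C D (i : 'I_n) : R := eff_demand C D i / D i.

Definition lp_feasible S C D b B : Prop :=
  \sum_(i < n) b i * D i <= S /\
  (forall i, 0 <= b i /\ b i <= max_fill C D i) /\
  (forall i, b i <= B) /\
  0 <= B /\ B <= 1.

Definition lp_objective theta b B : R :=
  \sum_(i < n) (b i - theta * (B - b i)).

Definition lp_optimal S C D theta b B : Prop :=
  lp_feasible S C D b B /\
  forall b' B', lp_feasible S C D b' B' ->
    lp_objective theta b' B' <= lp_objective theta b B.

Definition is_betaEQ S C D b0 : Prop :=
  0 <= b0 /\ lp_feasible S C D (fun _ => b0) b0 /\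
  forall b1, 0 <= b1 -> lp_feasible S C D (fun _ => b1) b1 -> b1 <= b0.

Definition mU C D b0 : nat := #|[set i : 'I_n | b0 < max_fill C D i]|.

Definition thetaU C D b0 : R :=
  (mU C D b0)%:R / (n - mU C D b0)%:R.

End FoodBank.

(** The equitable solution (beta^EQ, ..., beta^EQ) can only be improved by
    raising the fill-rates of the m^U unbinding agencies together with the
    maximum fill-rate beta. Raising them all by eps changes the objective by
    eps (m^U - theta (n - m^U)), which is positive exactly when
    theta < theta^U; since some agency is binding and beta^EQ D < S, a small
    eps > 0 keeps the solution feasible. Conversely, when theta >= theta^U,
    bounding beta_i by beta on the unbinding agencies and by beta^EQ on the
    binding ones shows that no feasible solution beats n beta^EQ. *)

From HB Require Import structures.
From mathcomp Require Import all_boot all_order all_algebra.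
From mathcomp Require Import ring lra.
Import Order.TTheory GRing.Theory Num.Theory.
Local Open Scope ring_scope.

Lemma sumr_if_in_set (V : nmodType) (n : nat) (A : {set 'I_n}) (x y : V) :
  \sum_(i < n) (if i \in A then x else y) = x *+ #|A| + y *+ (n - #|A|).
Proof.
rewrite (bigID (mem A)) /=.
rewrite (eq_bigr (fun=> x)) => [|i ->] //.
rewrite [X in _ + X](eq_bigr (fun=> y)) => [|i /negbTE ->] //.
rewrite !sumr_const; congr (_ + _ *+ _).
by rewrite -[n in (n - _)%N]card_ord -(cardC A) addKn.
Qed.

Section FoodBank.
Context {R : realFieldType} {n : nat} {S : R} {C D : 'I_n -> R}.
Hypotheses (C_gt0 : forall i, 0 < C i) (D_gt0 : forall i, 0 < D i).
Implicit Types (theta B eps : R) (b g : 'I_n -> R).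

Local Notation mf := (max_fill C D).
Local Notation Dsum := (\sum_(i < n) D i).

Definition unbinding (b0 : R) : {set 'I_n} := [set i | b0 < mf i].

Lemma max_fill_gt0 i : 0 < mf i.
Proof. by rewrite divr_gt0 // lt_min C_gt0 D_gt0. Qed.

Lemma max_fill_le1 i : mf i <= 1.
Proof. by rewrite ler_pdivrMr // mul1r ge_min lexx orbT. Qed.

Lemma Dsum_gt0 (i0 : 'I_n) : 0 < Dsum.
Proof.
rewrite (bigD1 i0) //= ltr_pwDl //.
by apply: sumr_ge0 => i _; apply: ltW.
Qed.

Lemma not_unbinding (b0 : R) i : i \notin unbinding b0 -> mf i <= b0.
Proof. by rewrite inE -leNgt. Qed.

Lemma card_unbinding_le (b0 : R) : (#|unbinding b0| <= n)%N.
Proof. by rewrite -[n in (_ <= n)%N]card_ord max_card. Qed.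

Lemma lp_feasible_const (b0 : R) :
  0 <= b0 -> b0 <= 1 -> b0 * Dsum <= S -> (forall i, b0 <= mf i) ->
  lp_feasible S C D (fun=> b0) b0.
Proof. by move=> b0_ge0 b0_le1 b0_S b0_mf; rewrite /lp_feasible -mulr_sumr. Qed.

Lemma lp_objectiveE theta b B :
  lp_objective theta b B = \sum_(i < n) b i - theta * \sum_(i < n) (B - b i).
Proof. by rewrite /lp_objective big_split /= mulr_sumr -sumrN. Qed.

Lemma lp_objective_const theta (b0 : R) :
  lp_objective theta (fun _ : 'I_n => b0) b0 = n%:R * b0.
Proof.
rewrite lp_objectiveE [X in _ * X]big1 => [|i _]; last exact: subrr.
by rewrite mulr0 subr0 sumr_const card_ord mulr_natl.
Qed.

Lemma lp_objective_le theta b B g :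
  0 <= theta -> (forall i, b i <= g i) ->
  lp_objective theta b B <= \sum_(i < n) ((1 + theta) * g i - theta * B).
Proof.
move=> theta_ge0 b_le_g; apply: ler_sum => i _.
by have := b_le_g i; nra.
Qed.

Lemma betaEQ_binding (b0 : R) (i0 : 'I_n) :
  is_betaEQ S C D b0 -> b0 * Dsum < S -> exists j, mf j = b0.
Proof.
move=> [b0_ge0 [[_ [b0_bounds _]] b0_max]] b0_lt_S.
have [j _ j_min] := @arg_minP _ _ _ i0 xpredT mf isT.
have Dsum_pos := Dsum_gt0 i0.
have S_pos : 0 < S by apply: le_lt_trans b0_lt_S; rewrite mulr_ge0 // ltW.
set b1 := Num.min (mf j) (S / Dsum).
have b1_ge0 : 0 <= b1 by rewrite le_min !ltW ?max_fill_gt0 ?divr_gt0.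
have b1_feasible : lp_feasible S C D (fun=> b1) b1.
  apply: lp_feasible_const => //.
  - by rewrite ge_min max_fill_le1.
  - by rewrite -ler_pdivlMr // ge_min lexx orbT.
  - by move=> i; rewrite ge_min j_min.
have := b0_max b1 b1_ge0 b1_feasible; rewrite ge_min => /orP[mfj_le_b0 | ].
  by exists j; apply/eqP; rewrite eq_le mfj_le_b0 (b0_bounds j).2.
by rewrite ler_pdivrMr // leNgt b0_lt_S.
Qed.

Lemma card_unbinding_lt j : (#|unbinding (mf j)| < n)%N.
Proof.
rewrite -[n in (_ < n)%N]card_ord -cardsT proper_card // properT.
by apply/negP => /eqP U_full; move: (in_setT j); rewrite -U_full inE ltxx.
Qed.

Section Equitable.
Variable b0 : R.
Local Notation m := #|unbinding b0|.

Lemma natr_split_unbinding : n%:R = m%:R + (n - m)%:R :> R.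
Proof. by rewrite -natrD subnKC // card_unbinding_le. Qed.

Lemma lp_objective_le_equitable theta b B :
  0 <= theta -> m%:R <= theta * (n - m)%:R -> lp_feasible S C D b B ->
  lp_objective theta b B <= n%:R * b0.
Proof.
move=> theta_ge0 m_le [_ [b_bounds [b_le_B _]]].
have [b0_le_B | B_lt_b0] := lerP b0 B; last first.
  apply: le_trans (lp_objective_le _ _ B _ theta_ge0 b_le_B) _.
  rewrite (eq_bigr (fun=> B)) => [|i _]; last by rewrite mulrDl mul1r addrK.
  by rewrite sumr_const card_ord mulr_natl lerMn2r ltW ?orbT.
pose g i := if i \in unbinding b0 then B else b0.
have b_le_g : forall i, b i <= g i.
  move=> i; rewrite /g; case: ifP => [_ | /negbT i_binding]; first exact: b_le_B.
  by apply: le_trans (b_bounds i).2 _; apply: not_unbinding.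
apply: le_trans (lp_objective_le _ _ B _ theta_ge0 b_le_g) _.
rewrite (eq_bigr (fun i => if i \in unbinding b0 then B else (1 + theta) * b0 - theta * B));
  last by move=> i _; rewrite /g; case: ifP; rewrite // mulrDl mul1r addrK.
rewrite sumr_if_in_set -[B *+ _]mulr_natr -[_ *+ (n - m)]mulr_natr.
rewrite natr_split_unbinding.
have : 0 <= (B - b0) * (theta * (n - m)%:R - m%:R) by rewrite mulr_ge0 ?subr_ge0.
lra.
Qed.

Definition raise_unbinding eps : 'I_n -> R :=
  fun i => if i \in unbinding b0 then b0 + eps else b0.

Lemma raise_unbinding_feasible eps :
  0 <= b0 -> 0 <= eps -> (forall i, b0 <= mf i) ->
  (forall i, i \in unbinding b0 -> b0 + eps <= mf i) ->
  b0 + eps <= 1 -> (b0 + eps) * Dsum <= S ->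
  lp_feasible S C D (raise_unbinding eps) (b0 + eps).
Proof.
move=> b0_ge0 eps_ge0 b0_mf raised_mf raised_le1 raised_S.
have b0_le_raised : b0 <= b0 + eps by rewrite lerDl.
have raised_ge0 : 0 <= b0 + eps by rewrite addr_ge0.
rewrite /lp_feasible /raise_unbinding; split; [|split; [|split]] => //.
- apply: le_trans raised_S; rewrite mulr_sumr; apply: ler_sum => i _.
  by apply: ler_wpM2r; [exact: ltW | case: ifP].
- by move=> i; case: ifP => [/raised_mf | _].
- by move=> i; case: ifP.
Qed.

Lemma lp_objective_raise_unbinding theta eps :
  lp_objective theta (raise_unbinding eps) (b0 + eps)
  = n%:R * b0 + eps * (m%:R - theta * (n - m)%:R).
Proof.
rewrite lp_objectiveE [X in _ * X](eq_bigr (fun i => if i \in unbinding b0 then 0 else eps)).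
  by rewrite !sumr_if_in_set natr_split_unbinding; ring.
by move=> i _; rewrite /raise_unbinding; case: ifP; rewrite ?subrr // addrAC subrr add0r.
Qed.

Lemma equitable_improvable theta :
  0 <= theta -> theta * (n - m)%:R < m%:R ->
  0 <= b0 -> (forall i, b0 <= mf i) -> b0 * Dsum < S ->
  exists b B, lp_feasible S C D b B /\
    n%:R * b0 < \sum_(i < n) b i - theta * \sum_(i < n) (B - b i).
Proof.
move=> theta_ge0 theta_lt b0_ge0 b0_mf b0_lt_S.
have m_gt0 : (0 < m)%N.
  by rewrite lt0n; apply: contraTneq theta_lt => ->; rewrite subn0 -leNgt mulr_ge0.
have /card_gt0P[i0 i0_unbinding] := m_gt0.
have [k k_unbinding k_min] := arg_minP mf i0_unbinding.
have Dsum_pos := Dsum_gt0 i0.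
set eps := Num.min (mf k - b0) ((S - b0 * Dsum) / Dsum).
have b0_lt_mfk : b0 < mf k by have : k \in unbinding b0 := k_unbinding; rewrite inE.
have eps_gt0 : 0 < eps by rewrite lt_min !subr_gt0 b0_lt_mfk divr_gt0 ?subr_gt0.
have raised_mf : b0 + eps <= mf k.
  have : eps <= mf k - b0 by rewrite ge_min lexx.
  lra.
have raised_S : (b0 + eps) * Dsum <= S.
  have : eps * Dsum <= S - b0 * Dsum by rewrite -ler_pdivlMr // ge_min lexx orbT.
  by rewrite mulrDl; lra.
exists (raise_unbinding eps), (b0 + eps); split.
  apply: raise_unbinding_feasible => //; first exact: ltW.
    by move=> i /k_min; apply: le_trans raised_mf.
  exact: le_trans raised_mf (max_fill_le1 k).
by rewrite -lp_objectiveE lp_objective_raise_unbinding ltrDl mulr_gt0 // subr_gt0.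
Qed.

End Equitable.
End FoodBank.

Theorem theorem1 (R : realFieldType) (n : nat) (hn : (0 < n)%N)
  (S : R) (C D : 'I_n -> R)
  (hS : 0 < S) (hC : forall i, 0 < C i) (hD : forall i, 0 < D i)
  (bEQ : R) (hEQ : is_betaEQ S C D bEQ)
  (hnu : bEQ * (\sum_(i < n) D i) < S) :
  (forall theta : R, thetaU C D bEQ <= theta ->
     lp_optimal S C D theta (fun _ => bEQ) bEQ) /\
  (forall theta : R, 0 <= theta -> theta < thetaU C D bEQ ->
     exists (b : 'I_n -> R) (B : R), lp_feasible S C D b B /\
       n%:R * bEQ < \sum_(i < n) b i - theta * \sum_(i < n) (B - b i)).
Proof.
have [j mf_j] := betaEQ_binding hC hD bEQ (Ordinal hn) hEQ hnu.
have nm_gt0 : 0 < (n - mU C D bEQ)%:R :> R.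
  by rewrite ltr0n subn_gt0 -mf_j; exact: card_unbinding_lt.
have [bEQ_ge0 [bEQ_feasible _]] := hEQ.
have bEQ_le_mf i : bEQ <= max_fill C D i := (bEQ_feasible.2.1 i).2.
split=> theta; rewrite /thetaU.
- rewrite ler_pdivrMr // => m_le.
  have theta_ge0 : 0 <= theta by rewrite -(pmulr_lge0 _ nm_gt0) (le_trans _ m_le).
  split=> [// | b B feasible].
  rewrite lp_objective_const.
  exact: lp_objective_le_equitable bEQ theta b B theta_ge0 m_le feasible.
- move=> theta_ge0; rewrite ltr_pdivlMr // => theta_lt.
  exact: equitable_improvable.
Qed.
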